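(* Let $R:\mathcal{C}\to\mathcal{D}$ and $L:\mathcal{D}\to\mathcal{C}$ be functors with $L$ left adjoint to $R$. Let $\mathcal{A}$ be a set of basic morphisms in $\mathcal{C}$ and $\mathcal{A}'$ a set of basic morphisms in $\mathcal{D}$ (all of unit cost) such that $R(\mathcal{A})\subset\mathcal{A}'$ and $L(\mathcal{A}')\subset\mathcal{A}$. Then for every finite diagram $D$ in $\mathcal{C}$ and every finite diagram $D'$ in $\mathcal{D}$, $$c^{\lim}_{\mathcal{D},\mathcal{A}'}(R(D))\le c^{\lim}_{\mathcal{C},\mathcal{A}}(D),\qquad c^{\mathrm{colim}}_{\mathcal{C},\mathcal{A}}(L(D'))\le c^{\mathrm{colim}}_{\mathcal{D},\mathcal{A}'}(D').$$
   Context: A diagram of finite shape $I=(V,E,s,t)$ in a category assigns objects to vertices and morphisms $D(e):D(s(e))\to D(t(e))$ to edges (no commutativity required); the image $F(D)$ under a functor $F$ is obtained by applying $F$ to all objects and morphisms. Subdiagrams are restrictions to full subgraphs. A limit computation with basic morphisms $\mathcal{A}$ is a sequence of diagrams $(D_0,\dots,D_s)$ where $D_0$ consists only of morphisms in $\mathcal{A}$ and each $D_i$ ($i\ge1$) is obtained from $D_{i-1}$ by choosing a full subgraph $J_i$, adding a new vertex $v_i$ carrying a limit of $D_{i-1}|_{J_i}$ with edges from $v_i$ to each vertex of $J_i$ carrying the limit cone morphisms, subject to constructivity: if $v_i$ lies in $J_j$ for some $j>i$ then $J_i\subseteq J_j$. Colimit computations are defined dually (colimits, cocone edges into the new vertex,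 same constructivity). A computation computes $D$ if $D$ is isomorphic to a not-necessarily-full subdiagram of $D_s$; its cost is $s$ plus the number of edges of $D_0$. $c^{\lim}_{\mathcal{C},\mathcal{A}}(D)$ (resp. $c^{\mathrm{colim}}_{\mathcal{C},\mathcal{A}}(D)$) is the minimum cost of a limit (resp. colimit) computation computing $D$, or $\infty$ if none exists. *)

From mathcomp Require Import all_boot.
From Stdlib Require Import Classical ClassicalEpsilon Wf_nat.

Set Implicit Arguments.
Unset Strict Implicit.
Unset Printing Implicit Defensive.

Record category := Category {
  Obj :> Type;
  Hom : Obj -> Obj -> Type;
  idm : forall x, Hom x x;
  comp : forall x y z, Hom y z -> Hom x y -> Hom x z;
  comp_idl : forall x y (f : Hom x y), comp (idm y) f = f;
  comp_idr : forall x y (f : Hom x y), comp f (idm x) = f;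
  compA : forall x y z w (f : Hom z w) (g : Hom y z) (h : Hom x y),
      comp f (comp g h) = comp (comp f g) h }.

Arguments Hom {C} x y : rename.
Arguments idm {C} x : rename.
Arguments comp {C x y z} f g : rename.

Record functor (C D : category) := Functor {
  fobj :> C -> D;
  fmap : forall x y : C, Hom x y -> Hom (fobj x) (fobj y);
  fmap_id : forall x, fmap (idm x) = idm (fobj x);
  fmap_comp : forall x y z (f : Hom y z) (g : Hom x y),
      fmap (comp f g) = comp (fmap f) (fmap g) }.

Arguments fmap {C D} F {x y} f : rename.

Record adjunction (C D : category) (L : functor D C) (R : functor C D) := Adjunction {
  adj_unit : forall d : D, Hom d (R (L d));
  adj_counit : forall c : C, Hom (L (R c)) c;
  adj_unit_nat : forall d d' (f : Hom d d'),
      comp (fmap R (fmap L f)) (adj_unit d) = comp (adj_unit d') f;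
  adj_counit_nat : forall c c' (g : Hom c c'),
      comp g (adj_counit c) = comp (adj_counit c') (fmap L (fmap R g));
  adj_tri_L : forall d, comp (adj_counit (L d)) (fmap L (adj_unit d)) = idm (L d);
  adj_tri_R : forall c, comp (fmap R (adj_counit c)) (adj_unit (R c)) = idm (R c) }.

Definition is_iso (C : category) (x y : C) (f : Hom x y) : Prop :=
  exists g : Hom y x, comp g f = idm x /\ comp f g = idm y.

Definition basic (C : category) := forall x y : C, Hom x y -> Prop.

(* Diagrams of finite shape (no commutativity required)                *)

Record diagram (C : category) := Diagram {
  dV : finType;
  dE : finType;
  dsrc : dE -> dV;
  dtgt : dE -> dV;
  dobj : dV -> C;
  dmor : forall e, Hom (dobj (dsrc e)) (dobj (dtgt e)) }.

Arguments dV {C} d.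
Arguments dE {C} d.
Arguments dsrc {C} d e.
Arguments dtgt {C} d e.
Arguments dobj {C} d v.
Arguments dmor {C} d e.

Definition fdiag (C D : category) (F : functor C D) (X : diagram C) : diagram D :=
  @Diagram D (dV X) (dE X) (dsrc X) (dtgt X) (fun v => F (dobj X v))
    (fun e => fmap F (dmor X e)).

Definition subV (C : category) (X : diagram C) (J : {set dV X}) : finType :=
  {v : dV X | v \in J}.

Definition is_cone (C : category) (X : diagram C) (J : {set dV X}) (Y : C)
    (q : forall v : subV J, Hom Y (dobj X (val v))) : Prop :=
  forall e (hs : dsrc X e \in J) (ht : dtgt X e \in J),
    comp (dmor X e) (q (exist (fun v => v \in J) (dsrc X e) hs))
    = q (exist (fun v => v \in J) (dtgt X e) ht).

Definition is_limit (C : category) (X : diagram C) (J : {set dV X}) (Y : C)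
    (pi : forall v : subV J, Hom Y (dobj X (val v))) : Prop :=
  is_cone pi /\
  forall (Z : C) (q : forall v : subV J, Hom Z (dobj X (val v))), is_cone q ->
    exists u : Hom Z Y, (forall v, comp (pi v) u = q v) /\
      forall u' : Hom Z Y, (forall v, comp (pi v) u' = q v) -> u' = u.

Definition is_cocone (C : category) (X : diagram C) (J : {set dV X}) (Y : C)
    (q : forall v : subV J, Hom (dobj X (val v)) Y) : Prop :=
  forall e (hs : dsrc X e \in J) (ht : dtgt X e \in J),
    comp (q (exist (fun v => v \in J) (dtgt X e) ht)) (dmor X e)
    = q (exist (fun v => v \in J) (dsrc X e) hs).

Definition is_colimit (C : category) (X : diagram C) (J : {set dV X}) (Y : C)
    (iota : forall v : subV J, Hom (dobj X (val v)) Y) : Prop :=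
  is_cocone iota /\
  forall (Z : C) (q : forall v : subV J, Hom (dobj X (val v)) Z), is_cocone q ->
    exists u : Hom Y Z, (forall v, comp u (iota v) = q v) /\
      forall u' : Hom Y Z, (forall v, comp u' (iota v) = q v) -> u' = u.

(* One step: add a new vertex (None) carrying Y, with one new edge     *)
(* per vertex of J (from the new vertex for limits, into it for        *)
(* colimits).                                                          *)

Section Ext.
Variables (C : category) (X : diagram C) (J : {set dV X}) (Y : C).

Definition ext_V : finType := option (dV X).
Definition ext_E : finType := (dE X + subV J)%type.
Definition ext_obj (v : ext_V) : C := if v is Some w then dobj X w else Y.

Definition extl_src (e : ext_E) : ext_V :=
  match e with inl e => Some (dsrc X e) | inr _ => None end.
Definition extl_tgt (e : ext_E) : ext_V :=
  match e with inl e => Some (dtgt X e) | inr v => Some (val v) end.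

Definition ext_lim (pi : forall v : subV J, Hom Y (dobj X (val v))) : diagram C :=
  @Diagram C ext_V ext_E extl_src extl_tgt ext_obj
    (fun e => match e as e0 return Hom (ext_obj (extl_src e0)) (ext_obj (extl_tgt e0)) with
              | inl e => dmor X e | inr v => pi v end).

Definition extc_src (e : ext_E) : ext_V :=
  match e with inl e => Some (dsrc X e) | inr v => Some (val v) end.
Definition extc_tgt (e : ext_E) : ext_V :=
  match e with inl e => Some (dtgt X e) | inr _ => None end.

Definition ext_colim (iota : forall v : subV J, Hom (dobj X (val v)) Y) : diagram C :=
  @Diagram C ext_V ext_E extc_src extc_tgt ext_obj
    (fun e => match e as e0 return Hom (ext_obj (extc_src e0)) (ext_obj (extc_tgt e0)) with
              | inl e => dmor X e | inr v => iota v end).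
End Ext.

(* the added vertices (v_1, ..., v_i) are tracked by a predicate *)
Definition ext_added (C : category) (X : diagram C) (added : dV X -> bool)
  (v : option (dV X)) : bool := if v is Some w then added w else true.

(* Limit computations: lim_comp A X added n means X = D_s for a limit
   computation (D_0,...,D_s) of cost n (= s + #edges of D_0), and
   [added] marks v_1,...,v_s.  In D_s the edges out of an added vertex
   v_i are exactly its cone edges, so their targets form J_i; the
   constructivity condition (v_i in J_j, i < j  ==>  J_i subset J_j) is
   checked when v_j is added. *)
Inductive lim_comp (C : category) (A : basic C) :
    forall X : diagram C, (dV X -> bool) -> nat -> Prop :=
| lim_base (X : diagram C) :
    (forall e, A _ _ (dmor X e)) ->
    (forall v, exists e, dsrc X e = v \/ dtgt X e = v) ->
    @lim_comp C A X (fun _ => false) #|dE X|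
| lim_step (X : diagram C) added n (J : {set dV X}) (Y : C)
    (pi : forall v : subV J, Hom Y (dobj X (val v))) :
    @lim_comp C A X added n ->
    is_limit pi ->
    (forall w, added w -> w \in J -> forall e, dsrc X e = w -> dtgt X e \in J) ->
    @lim_comp C A (ext_lim pi) (ext_added added) n.+1.

Inductive colim_comp (C : category) (A : basic C) :
    forall X : diagram C, (dV X -> bool) -> nat -> Prop :=
| colim_base (X : diagram C) :
    (forall e, A _ _ (dmor X e)) ->
    (forall v, exists e, dsrc X e = v \/ dtgt X e = v) ->
    @colim_comp C A X (fun _ => false) #|dE X|
| colim_step (X : diagram C) added n (J : {set dV X}) (Y : C)
    (iota : forall v : subV J, Hom (dobj X (val v)) Y) :
    @colim_comp C A X added n ->
    is_colimit iota ->
    (forall w, added w -> w \in J -> forall e, dtgt X e = w -> dsrc X e \in J) ->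
    @colim_comp C A (ext_colim iota) (ext_added added) n.+1.

(* D is isomorphic to a (not necessarily full) subdiagram of S         *)

Definition tr (C : category) (V : Type) (ob : V -> C) (x : C) (w w' : V)
    (h : w = w') (f : Hom x (ob w)) : Hom x (ob w') :=
  eq_rect w (fun u => Hom x (ob u)) f w' h.
Arguments tr {C V} ob {x w w'} h f.

Definition iso_subdiag (C : category) (D S : diagram C) : Prop :=
  exists (fV : dV D -> dV S) (fE : dE D -> dE S)
         (hs : forall e, fV (dsrc D e) = dsrc S (fE e))
         (ht : forall e, fV (dtgt D e) = dtgt S (fE e))
         (a : forall v, Hom (dobj D v) (dobj S (fV v))),
    injective fV /\ injective fE /\ (forall v, is_iso (a v)) /\
    forall e, comp (dmor S (fE e)) (tr (dobj S) (hs e) (a (dsrc D e)))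
              = comp (tr (dobj S) (ht e) (a (dtgt D e))) (dmor D e).

Inductive natinf := Fin of nat | Inf.

Definition le_inf (a b : natinf) : Prop :=
  match a, b with
  | _, Inf => True
  | Inf, Fin _ => False
  | Fin m, Fin n => m <= n
  end.

Lemma ex_least_nat (P : nat -> Prop) :
  (exists n, P n) -> exists n, P n /\ forall m, P m -> n <= m.
Proof.
move=> h.
have [n [[Pn Hn] _]] :=
  dec_inh_nat_subset_has_unique_least_element P (fun n => classic (P n)) h.
by exists n; split=> // m Pm; apply/leP; apply: Hn.
Qed.

Definition min_cost (P : nat -> Prop) : natinf :=
  match excluded_middle_informative (exists n, P n) with
  | left h => Fin (proj1_sig (constructive_indefinite_description _ (ex_least_nat h)))
  | right _ => Inf
  end.

Definition c_lim (C : category) (A : basic C) (D : diagram C) : natinf :=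
  min_cost (fun n => exists (S : diagram C) added, @lim_comp C A S added n /\ iso_subdiag D S).

Definition c_colim (C : category) (A : basic C) (D : diagram C) : natinf :=
  min_cost (fun n => exists (S : diagram C) added, @colim_comp C A S added n /\ iso_subdiag D S).

(* A functor F that sends basic morphisms to basic morphisms and preserves
   limits maps a limit computation (D_0, ..., D_s) step by step to the limit
   computation (F D_0, ..., F D_s): the image of a limit cone is a limit cone,
   the chosen subgraphs J_i and hence constructivity are unchanged, and so is
   the cost.  Since F preserves isomorphic subdiagrams, every computation of D
   yields one of F D of the same cost.  A right adjoint preserves limits and a
   left adjoint preserves colimits, by transposing cones along the
   adjunction. *)

From Pilot Require Import Defs.
From mathcomp Require Import all_boot.
From Stdlib Require Import ClassicalEpsilon FunctionalExtensionality JMeq.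

(* Let the composition of Defs shadow [ssrfun.comp] and [ssrfun.compA]. *)
Import Defs.

Lemma le_min_cost (P Q : nat -> Prop) :
  (forall n, P n -> Q n) -> le_inf (min_cost Q) (min_cost P).
Proof.
move=> PQ; rewrite /min_cost.
case: excluded_middle_informative => [exQ|noQ];
  case: excluded_middle_informative => [exP|noP] //=.
- case: constructive_indefinite_description => m [Qm least_m].
  case: constructive_indefinite_description => k [Pk _] /=.
  exact/least_m/PQ.
- by case: exP => k /PQ Qk; apply: noQ; exists k.
Qed.

Lemma tr_fmap (C D : category) (F : functor C D) (V : Type) (ob : V -> C)
    (x : C) (w w' : V) (h : w = w') (f : Hom x (ob w)) :
  tr (fun v => F (ob v)) h (fmap F f) = fmap F (tr ob h f).
Proof. by case: w' / h. Qed.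

Lemma iso_subdiag_fdiag (C D : category) (F : functor C D) (X S : diagram C) :
  iso_subdiag X S -> iso_subdiag (fdiag F X) (fdiag F S).
Proof.
case=> fV [fE [hs [ht [a [inj_fV [inj_fE [iso_a a_comm]]]]]]].
exists fV, fE, hs, ht, (fun v => fmap F (a v)); do 3!split=> //.
- move=> v; case: (iso_a v) => g [ga ag]; exists (fmap F g).
  by rewrite -!fmap_comp ga ag !fmap_id.
- by move=> e /=; rewrite !tr_fmap -!fmap_comp a_comm.
Qed.

(* [fdiag F (ext_lim pi)] and [ext_lim (F pi)] differ only in whether F is
   applied outside or inside the matches on vertices and edges; a direct rewrite
   is blocked because the [added] argument of a computation depends on the
   diagram, hence the abstraction over P. *)
Lemma eq_Diagram_added {C : category} (P : forall X : diagram C, (dV X -> bool) -> Prop)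
    {V E : finType} {s t : E -> V} {o1 o2 : V -> C}
    {m1 : forall e, Hom (o1 (s e)) (o1 (t e))}
    {m2 : forall e, Hom (o2 (s e)) (o2 (t e))} {added : V -> bool} :
  o1 =1 o2 -> (forall e, JMeq (m1 e) (m2 e)) ->
  P (Diagram m1) added -> P (Diagram m2) added.
Proof.
move=> /functional_extensionality eq_o; subst o2 => eq_m.
by have -> : m1 = m2 by apply: functional_extensionality_dep => e; apply: JMeq_eq.
Qed.

Section FunctorImage.
Context {C D : category} {F : functor C D} {A : basic C} {A' : basic D}.
Hypothesis F_basic : forall (x y : C) (f : Hom x y), A x y f -> A' _ _ (fmap F f).

Section LimitComputations.
Hypothesis F_limit : forall (X : diagram C) (J : {set dV X}) (Y : C)
  (pi : forall v : subV J, Hom Y (dobj X (val v))),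
  is_limit pi -> @is_limit D (fdiag F X) J (F Y) (fun v => fmap F (pi v)).

Lemma lim_comp_fdiag (S : diagram C) added n :
  @lim_comp C A S added n -> @lim_comp D A' (fdiag F S) added n.
Proof.
elim=> [X A_X cover_X | X added' n' J Y pi _ IH lim_pi constructive].
  exact: (@lim_base D A' (fdiag F X) (fun e => F_basic _ _ _ (A_X e)) cover_X).
apply: (eq_Diagram_added (fun X a => @lim_comp D A' X a n'.+1) _ _
          (lim_step IH (F_limit _ _ _ _ lim_pi) constructive)); by case.
Qed.

Lemma le_c_lim_fdiag (X : diagram C) : le_inf (c_lim A' (fdiag F X)) (c_lim A X).
Proof.
apply: le_min_cost => n [S [added [comp_S sub_S]]].
by exists (fdiag F S), added; split; [apply: lim_comp_fdiag | apply: iso_subdiag_fdiag].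
Qed.

End LimitComputations.

Section ColimitComputations.
Hypothesis F_colimit : forall (X : diagram C) (J : {set dV X}) (Y : C)
  (iota : forall v : subV J, Hom (dobj X (val v)) Y),
  is_colimit iota -> @is_colimit D (fdiag F X) J (F Y) (fun v => fmap F (iota v)).

Lemma colim_comp_fdiag (S : diagram C) added n :
  @colim_comp C A S added n -> @colim_comp D A' (fdiag F S) added n.
Proof.
elim=> [X A_X cover_X | X added' n' J Y iota _ IH colim_iota constructive].
  exact: (@colim_base D A' (fdiag F X) (fun e => F_basic _ _ _ (A_X e)) cover_X).
apply: (eq_Diagram_added (fun X a => @colim_comp D A' X a n'.+1) _ _
          (colim_step IH (F_colimit _ _ _ _ colim_iota) constructive)); by case.
Qed.

Lemma le_c_colim_fdiag (X : diagram C) :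
  le_inf (c_colim A' (fdiag F X)) (c_colim A X).
Proof.
apply: le_min_cost => n [S [added [comp_S sub_S]]].
by exists (fdiag F S), added; split; [apply: colim_comp_fdiag | apply: iso_subdiag_fdiag].
Qed.

End ColimitComputations.
End FunctorImage.

Section AdjointTranspose.
Context {C D : category} {L : functor D C} {R : functor C D} (adj : adjunction L R).

Definition ladj_transpose {d : D} {c : C} (g : Hom d (R c)) : Hom (L d) c :=
  comp (adj_counit adj c) (fmap L g).

Definition radj_transpose {d : D} {c : C} (f : Hom (L d) c) : Hom d (R c) :=
  comp (fmap R f) (adj_unit adj d).

Lemma ladj_transposeK (d : D) (c : C) :
  cancel (@ladj_transpose d c) (@radj_transpose d c).
Proof.
move=> g; rewrite /radj_transpose /ladj_transpose fmap_comp -compA adj_unit_nat.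
by rewrite compA adj_tri_R comp_idl.
Qed.

Lemma radj_transposeK (d : D) (c : C) :
  cancel (@radj_transpose d c) (@ladj_transpose d c).
Proof.
move=> f; rewrite /radj_transpose /ladj_transpose fmap_comp compA -adj_counit_nat.
by rewrite -compA adj_tri_L comp_idr.
Qed.

Lemma ladj_transpose_compl (d : D) (c c' : C) (h : Hom c c') (g : Hom d (R c)) :
  ladj_transpose (comp (fmap R h) g) = comp h (ladj_transpose g).
Proof. by rewrite /ladj_transpose fmap_comp compA -adj_counit_nat compA. Qed.

Lemma radj_transpose_compr (d d' : D) (c : C) (f : Hom (L d') c) (k : Hom d d') :
  radj_transpose (comp f (fmap L k)) = comp (radj_transpose f) k.
Proof. by rewrite /radj_transpose fmap_comp -!compA adj_unit_nat. Qed.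

Lemma radj_transpose_compl (d : D) (c c' : C) (h : Hom c c') (f : Hom (L d) c) :
  radj_transpose (comp h f) = comp (fmap R h) (radj_transpose f).
Proof. by rewrite /radj_transpose fmap_comp compA. Qed.

Lemma ladj_transpose_compr (d d' : D) (c : C) (g : Hom d' (R c)) (k : Hom d d') :
  ladj_transpose (comp g k) = comp (ladj_transpose g) (fmap L k).
Proof. by rewrite /ladj_transpose fmap_comp compA. Qed.

Lemma radj_is_limit (X : diagram C) (J : {set dV X}) (Y : C)
    (pi : forall v : subV J, Hom Y (dobj X (val v))) :
  is_limit pi -> @is_limit D (fdiag R X) J (R Y) (fun v => fmap R (pi v)).
Proof.
case=> cone_pi univ_pi; split=> [e hs ht | Z q cone_q] /=.
  by rewrite -fmap_comp cone_pi.
have cone_q' : @is_cone C X J (L Z) (fun v => ladj_transpose (q v)).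
  by move=> e hs ht; rewrite -ladj_transpose_compl; congr ladj_transpose; exact: cone_q.
have [u [pi_u u_uniq]] := univ_pi _ _ cone_q'.
exists (radj_transpose u); split=> [v | u' pi_u'].
  by rewrite -radj_transpose_compl pi_u ladj_transposeK.
rewrite -[u']ladj_transposeK; congr radj_transpose; apply: u_uniq => v.
by rewrite -ladj_transpose_compl pi_u'.
Qed.

Lemma ladj_is_colimit (X : diagram D) (J : {set dV X}) (Y : D)
    (iota : forall v : subV J, Hom (dobj X (val v)) Y) :
  is_colimit iota -> @is_colimit C (fdiag L X) J (L Y) (fun v => fmap L (iota v)).
Proof.
case=> cocone_iota univ_iota; split=> [e hs ht | Z q cocone_q] /=.
  by rewrite -fmap_comp cocone_iota.
have cocone_q' : @is_cocone D X J (R Z) (fun v => radj_transpose (q v)).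
  by move=> e hs ht; rewrite -radj_transpose_compr; congr radj_transpose; exact: cocone_q.
have [u [u_iota u_uniq]] := univ_iota _ _ cocone_q'.
exists (ladj_transpose u); split=> [v | u' u'_iota].
  by rewrite -ladj_transpose_compr u_iota radj_transposeK.
rewrite -[u']radj_transposeK; congr ladj_transpose; apply: u_uniq => v.
by rewrite -radj_transpose_compr u'_iota.
Qed.

End AdjointTranspose.

Theorem lemma6p1 (C D : category) (R : functor C D) (L : functor D C)
  (adj : adjunction L R) (A : basic C) (A' : basic D)
  (hRA : forall (x y : C) (f : Hom x y), A x y f -> A' _ _ (fmap R f))
  (hLA : forall (x y : D) (f : Hom x y), A' x y f -> A _ _ (fmap L f)) :
  (forall X : diagram C, le_inf (c_lim A' (fdiag R X)) (c_lim A X)) /\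
  (forall X' : diagram D, le_inf (c_colim A (fdiag L X')) (c_colim A' X')).
Proof.
split=> X.
- exact: (le_c_lim_fdiag hRA (radj_is_limit adj)).
- exact: (le_c_colim_fdiag hLA (ladj_is_colimit adj)).
Qed.
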